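(* Let $d\ge1$, $\delta>0$, $L>0$, and let $F$ be a real-valued function that is continuously differentiable on an open set containing $[-\delta,1+\delta]^d$ and whose gradient is $L$-Lipschitz on $[-\delta,1+\delta]^d$. Then for every $\epsilon>0$ there exist integers $n_1,n_2\ge1$, scalars $t_1,t_2>0$, matrices $\boldsymbol{W}_k\in\mathbb{R}^{n_k\times d}$ and vectors $\boldsymbol{a}_k\in\mathbb{R}^{n_k}$, $\boldsymbol{c}_k\in\mathbb{R}^d$ ($k=1,2$) such that, with $g_k(\boldsymbol{x})=\boldsymbol{W}_k^\top\mathrm{softmax}(t_k(\boldsymbol{W}_k\boldsymbol{x}+\boldsymbol{a}_k))+\boldsymbol{c}_k$, $$\sup_{\boldsymbol{x}\in[0,1]^d}\|\nabla F(\boldsymbol{x})-(g_1(\boldsymbol{x})-g_2(\boldsymbol{x}))\|<\epsilon .$$ Moreover $g_1-g_2$ is the gradient of a $C^1$ function on $\mathbb{R}^d$.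
   Context: $\mathrm{softmax}(\boldsymbol{z})_i=e^{z_i}/\sum_j e^{z_j}$. $\|\cdot\|$ is the Euclidean norm. *)

From HB Require Import structures.
From mathcomp Require Import all_boot all_order all_algebra.
From mathcomp Require Import all_classical all_reals all_analysis.
Set Implicit Arguments. Unset Strict Implicit. Unset Printing Implicit Defensive.
Import Order.TTheory GRing.Theory Num.Theory.
Import numFieldNormedType.Exports.
Local Open Scope classical_set_scope.
Local Open Scope ring_scope.

(* Euclidean norm on R^d (the library's norm on matrices is the max norm). *)
Definition enorm {R : realType} {d : nat} (v : 'rV[R]_d) : R :=
  Num.sqrt (\sum_(i < d) (v ord0 i) ^+ 2).

Definition softmax {R : realType} {n : nat} (z : 'rV[R]_n) : 'rV[R]_n :=
  \row_(i < n) (expR (z ord0 i) / \sum_(j < n) expR (z ord0 j)).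

Definition grad {R : realType} {d : nat} (F : 'rV[R]_d -> R) (x : 'rV[R]_d)
  : 'rV[R]_d :=
  \row_(i < d) ('D_(delta_mx ord0 i) F x).

Definition cube {R : realType} {d : nat} (a b : R) : set 'rV[R]_d :=
  [set x | forall i : 'I_d, a <= x ord0 i <= b].

(* g(x) = W^T softmax(t (W x + a)) + c, written with row vectors:
   W x = x *m W^T,  W^T s = s *m W. *)
Definition softmax_layer {R : realType} {n d : nat} (t : R) (W : 'M[R]_(n, d))
  (a : 'rV[R]_n) (c : 'rV[R]_d) (x : 'rV[R]_d) : 'rV[R]_d :=
  softmax (t *: (x *m W^T + a)) *m W + c.

From HB Require Import structures.
From mathcomp Require Import all_boot all_order all_algebra.
From mathcomp Require Import all_classical all_reals all_analysis.
From mathcomp Require Import lra ring.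
Import Order.TTheory GRing.Theory Num.Theory.
Import numFieldNormedType.Exports.
Local Open Scope classical_set_scope.
Local Open Scope ring_scope.

(* With K = 4L, Phi x = F x + K/2 |x|^2 lies above each of its tangent planes
   l_p, and by the Taylor bound for the L-Lipschitz gradient the height
   Phi x - l_p x is between L |x - p|^2 and 3L |x - p|^2.  On a fine grid of
   points p_j, the softmax of t l_{p_j}(x) therefore concentrates, as t grows,
   on grid points close to x, so the softmax layer with rows grad Phi (p_j)
   approximates grad Phi x = grad F x + K x uniformly on the cube.  Doing the
   same for the quadratic K/2 |x|^2 alone and subtracting leaves grad F.  Each
   layer is the exact gradient of the smooth log-sum-exp potential
   t^-1 log sum_j exp (t l_{p_j}(x)), so the difference is a gradient field. *)
Section Euclidean.
Context {R : realType} {d : nat}.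
Implicit Types u v w x p : 'rV[R]_d.

Definition dot u v : R := \sum_(i < d) u ord0 i * v ord0 i.

Lemma dotC u v : dot u v = dot v u.
Proof. by apply: eq_bigr => i _; rewrite mulrC. Qed.

Lemma dotDl u v w : dot (u + v) w = dot u w + dot v w.
Proof. by rewrite /dot -big_split; apply: eq_bigr => i _; rewrite !mxE mulrDl. Qed.

Lemma dotNl u w : dot (- u) w = - dot u w.
Proof. by rewrite /dot -sumrN; apply: eq_bigr => i _; rewrite !mxE mulNr. Qed.

Lemma dotZl (k : R) u w : dot (k *: u) w = k * dot u w.
Proof. by rewrite /dot mulr_sumr; apply: eq_bigr => i _; rewrite !mxE mulrA. Qed.

Lemma dotBl u v w : dot (u - v) w = dot u w - dot v w.
Proof. by rewrite dotDl dotNl. Qed.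

Lemma dotDr u v w : dot w (u + v) = dot w u + dot w v.
Proof. by rewrite dotC dotDl !(dotC w). Qed.

Lemma dotBr u v w : dot w (u - v) = dot w u - dot w v.
Proof. by rewrite dotC dotBl !(dotC w). Qed.

Lemma dotZr (k : R) u w : dot w (k *: u) = k * dot w u.
Proof. by rewrite dotC dotZl dotC. Qed.

Lemma dot0l w : dot 0 w = 0.
Proof. by rewrite -(scale0r 0) dotZl mul0r. Qed.

Lemma dot_delta_mx w i : dot (delta_mx ord0 i) w = w ord0 i.
Proof.
rewrite /dot (bigD1 i) //= big1 ?addr0; first by rewrite mxE !eqxx mul1r.
by move=> k /negbTE ki; rewrite mxE ki andbF mul0r.
Qed.

Lemma dot_ge0 u : 0 <= dot u u.
Proof. by apply: sumr_ge0 => i _; rewrite -expr2 sqr_ge0. Qed.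

Lemma enormE u : enorm u = Num.sqrt (dot u u).
Proof. by congr Num.sqrt; apply: eq_bigr => i _; rewrite expr2. Qed.

Lemma enorm_ge0 u : 0 <= enorm u.
Proof. by rewrite enormE sqrtr_ge0. Qed.

Lemma enorm_sqr u : enorm u ^+ 2 = dot u u.
Proof. by rewrite enormE sqr_sqrtr // dot_ge0. Qed.

(* Lagrange's identity: the gap is the sum of the squares (u_i v_j - u_j v_i)^2. *)
Lemma dot_sqr_le u v : dot u v ^+ 2 <= dot u u * dot v v.
Proof.
pose a : 'I_d -> R := fun i => u ord0 i; pose b : 'I_d -> R := fun i => v ord0 i.
have Euv : dot u u * dot v v = \sum_(i < d) \sum_(j < d) a i * a i * (b j * b j).
  by rewrite /dot mulr_suml; apply: eq_bigr => i _; rewrite mulr_sumr.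
have Evu : dot u u * dot v v = \sum_(i < d) \sum_(j < d) a j * a j * (b i * b i).
  rewrite mulrC /dot mulr_suml; apply: eq_bigr => i _; rewrite mulr_sumr.
  by apply: eq_bigr => j _; rewrite mulrC.
have Edot : dot u v ^+ 2 = \sum_(i < d) \sum_(j < d) a i * b i * (a j * b j).
  by rewrite expr2 /dot mulr_suml; apply: eq_bigr => i _; rewrite mulr_sumr.
have : 0 <= \sum_(i < d) \sum_(j < d) (a i * b j - a j * b i) ^+ 2.
  by apply: sumr_ge0 => i _; apply: sumr_ge0 => j _; rewrite sqr_ge0.
have -> : \sum_(i < d) \sum_(j < d) (a i * b j - a j * b i) ^+ 2 =
   \sum_(i < d) (\sum_(j < d) a i * a i * (b j * b j) +
     \sum_(j < d) a j * a j * (b i * b i) - 2 * \sum_(j < d) a i * b i * (a j * b j)).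
  apply: eq_bigr => i _; rewrite mulr_sumr -big_split -sumrB; apply: eq_bigr => j _.
  by move: (a i) (b j) (a j) (b i) => x1 x2 x3 x4 /=; ring.
rewrite sumrB big_split /= -mulr_sumr -Euv -Evu -Edot; lra.
Qed.

Lemma normr_dot_le u v : `|dot u v| <= enorm u * enorm v.
Proof.
have := dot_sqr_le u v; rewrite -!enorm_sqr -exprMn -(real_normK (num_real (dot u v))).
have := mulr_ge0 (enorm_ge0 u) (enorm_ge0 v); have := normr_ge0 (dot u v); nra.
Qed.

Lemma enormN u : enorm (- u) = enorm u.
Proof. by rewrite !enormE dotNl [dot u _]dotC dotNl opprK. Qed.

Lemma enorm_distC u v : enorm (u - v) = enorm (v - u).
Proof. by rewrite -enormN opprB. Qed.

Lemma enormZ (k : R) u : enorm (k *: u) = `|k| * enorm u.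
Proof. by rewrite !enormE dotZl dotZr mulrA -expr2 sqrtrM ?sqr_ge0 // sqrtr_sqr. Qed.

Lemma enorm0 : enorm (0 : 'rV[R]_d) = 0.
Proof. by rewrite -(scale0r 0) enormZ normr0 mul0r. Qed.

Lemma enormD_le u v : enorm (u + v) <= enorm u + enorm v.
Proof.
have uv0 : 0 <= enorm u + enorm v by rewrite addr_ge0 // enorm_ge0.
rewrite [leLHS]enormE -(ger0_norm uv0) -sqrtr_sqr ler_sqrt ?sqr_ge0 //.
rewrite dotDl !dotDr sqrrD !enorm_sqr (dotC v u).
have := normr_dot_le u v; have := ler_norm (dot u v); lra.
Qed.

Lemma enorm_sum_le (I : Type) (r : seq I) (P : pred I) (f : I -> 'rV[R]_d) :
  enorm (\sum_(i <- r | P i) f i) <= \sum_(i <- r | P i) enorm (f i).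
Proof.
apply: (big_ind2 (fun a b => enorm a <= b)) => //; first by rewrite enorm0.
by move=> x1 x2 y1 y2 h1 h2; apply: le_trans (enormD_le _ _) (lerD h1 h2).
Qed.

Lemma cube_segment {a b s : R} {x p} : cube a b x -> cube a b p -> 0 <= s <= 1 ->
  cube a b (p + s *: (x - p)).
Proof.
move=> hx hp /andP[s0 s1] i; rewrite !mxE.
have /andP[x1 x2] := hx i; have /andP[p1 p2] := hp i; apply/andP; split; nra.
Qed.

Lemma subset_cube (a b a' b' : R) : a' <= a -> b <= b' -> @cube R d a b `<=` cube a' b'.
Proof. by move=> aa bb x hx i; have /andP[x1 x2] := hx i; apply/andP; split; lra. Qed.

Lemma cube01_dist_sqr_le x p : cube 0 1 x -> cube 0 1 p -> dot (x - p) (x - p) <= d%:R.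
Proof.
move=> hx hp; apply: (@le_trans _ _ (\sum_(i < d) (1 : R))); last first.
  by rewrite sumr_const card_ord.
by apply: ler_sum => i _; rewrite !mxE; have := hx i; have := hp i; nra.
Qed.

Lemma round_down_grid (N : nat) (y : R) : (0 < N)%N -> 0 <= y <= 1 ->
  exists k : 'I_N.+1, 0 <= y - k%:R / N%:R <= N%:R^-1.
Proof.
move=> N0 /andP[y0 y1]; have N0' : 0 < N%:R :> R by rewrite ltr0n.
have yN0 : 0 <= y * N%:R by rewrite mulr_ge0 // ltW.
have /andP[k1 k2] := truncn_itv yN0.
have kN : (Num.truncn (y * N%:R) < N.+1)%N.
  rewrite ltnS -(ler_nat R); apply: le_trans k1 _; rewrite ler_piMl // ltW.
exists (Ordinal kN) => /=.
have -> : y - (Num.truncn (y * N%:R))%:R / N%:R =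
    (y * N%:R - (Num.truncn (y * N%:R))%:R) / N%:R by rewrite mulrBl mulfK ?gt_eqF.
rewrite divr_ge0 ?subr_ge0 //= ler_pdivrMr // mulVf ?gt_eqF //.
by rewrite -natr1 in k2; lra.
Qed.

Lemma cube_net {h : R} : 0 < h ->
  exists n (P : 'I_n -> 'rV[R]_d), [/\ (0 < n)%N, forall j, cube 0 1 (P j) &
    forall x, cube 0 1 x -> exists m, dot (x - P m) (x - P m) <= h].
Proof.
move=> h0; pose N := (Num.truncn (d%:R / h)).+1.
have N0 : 0 < N%:R :> R by rewrite ltr0n.
pose P (j : 'I_#|{ffun 'I_d -> 'I_N.+1}|) : 'rV[R]_d :=
  \row_i ((enum_val j i : nat)%:R / N%:R).
exists _, P; split.
- by apply/card_gt0P; exists [ffun=> ord0].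
- move=> j i; rewrite mxE divr_ge0 ?ler0n //= ler_pdivrMr // mul1r ler_nat.
  by rewrite -ltnS.
move=> x hx; have /fin_all_exists [f hf] : forall i, exists k : 'I_N.+1,
    0 <= x ord0 i - k%:R / N%:R <= N%:R^-1 by move=> i; exact: round_down_grid.
exists (enum_rank [ffun i => f i]).
apply: (@le_trans _ _ (\sum_(i < d) N%:R^-1 ^+ 2)).
  apply: ler_sum => i _; rewrite !mxE enum_rankK ffunE expr2.
  by have /andP[e0 e1] := hf i; apply: ler_pM.
rewrite sumr_const card_ord -[_ *+ d]mulr_natl expr2 mulrA.
have hN : d%:R / h < N%:R by exact: truncnS_gt.
have dN : d%:R * N%:R^-1 <= h by rewrite ler_pdivrMr // mulrC -ler_pdivrMr // ltW.
apply: le_trans dN; rewrite ler_piMr ?mulr_ge0 ?invr_ge0 ?ler0n // invr_le1 ?unitfE ?gt_eqF //.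
by rewrite ler1n.
Qed.

End Euclidean.

Section SoftmaxLayer.
Context {R : realType} {d : nat}.

Definition logit (t : R) (w : 'rV[R]_d) (b : R) (x : 'rV[R]_d) : R := t * (dot x w + b).

Definition expsum {n} t (W : 'M[R]_(n, d)) (a : 'rV[R]_n) x : R :=
  \sum_j expR (logit t (row j W) (a ord0 j) x).

Lemma expsum_gt0 {n} t (W : 'M[R]_(n, d)) a x : (0 < n)%N -> 0 < expsum t W a x.
Proof.
move=> n0; rewrite /expsum (bigD1 (Ordinal n0)) //=.
by rewrite ltr_pwDl ?expR_gt0 // sumr_ge0 // => j _; rewrite expR_ge0.
Qed.

Lemma softmax_layerE {n} t (W : 'M[R]_(n, d)) a c x :
  softmax_layer t W a c x =
  \sum_j (expR (logit t (row j W) (a ord0 j) x) / expsum t W a x) *: row j W + c.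
Proof.
have logitE k : (t *: (x *m W^T + a)) ord0 k = logit t (row k W) (a ord0 k) x.
  by rewrite !mxE /logit /dot; congr (_ * (_ + _)); apply: eq_bigr => l _; rewrite !mxE.
apply/rowP => i; rewrite /softmax_layer /softmax !mxE summxE; congr (_ + _).
apply: eq_bigr => j _; rewrite [in RHS]mxE [in RHS]mxE /softmax mxE -logitE.
by congr (_ / _ * _); apply: eq_bigr => k _; rewrite logitE.
Qed.

(* A point beaten by z_m by at least margin has softmax weight at most e^{-margin}. *)
Lemma softmax_average_near {n} (m : 'I_n) (z : 'I_n -> R) (w : 'I_n -> 'rV[R]_d)
    (u : 'rV[R]_d) (r margin D : R) :
  0 <= r ->
  (forall j, enorm (w j - u) <= D) ->
  (forall j, enorm (w j - u) <= r \/ z j <= z m - margin) ->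
  enorm (\sum_j (expR (z j) / \sum_k expR (z k)) *: w j - u)
    <= r + n%:R * D * expR (- margin).
Proof.
move=> r0 hD near_or_beaten.
set S := \sum_k expR (z k); pose s j := expR (z j) / S.
have Sm : expR (z m) <= S.
  by rewrite /S (bigD1 m) //= lerDl sumr_ge0 // => k _; rewrite expR_ge0.
have S0 : 0 < S by apply: lt_le_trans Sm; exact: expR_gt0.
have s0 j : 0 <= s j by rewrite divr_ge0 ?expR_ge0 // ltW.
have s1 : \sum_j s j = 1 by rewrite -mulr_suml divff // gt_eqF.
have D0 : 0 <= D by apply: le_trans (hD m); exact: enorm_ge0.
have -> : \sum_j (expR (z j) / S) *: w j - u = \sum_j s j *: (w j - u).
  rewrite -[X in _ - X]scale1r -s1 scaler_suml -sumrB.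
  by apply: eq_bigr => j _; rewrite scalerBr.
apply: le_trans (enorm_sum_le _ _ _ _) _.
apply: (@le_trans _ _ (\sum_(j < n) (s j * r + D * expR (- margin)))).
  apply: ler_sum => j _; rewrite enormZ ger0_norm //.
  have [near|beaten] := near_or_beaten j.
    by apply: le_trans (ler_wpM2l (s0 j) near) _; rewrite lerDl mulr_ge0 ?expR_ge0.
  have sj : s j <= expR (- margin).
    apply: (@le_trans _ _ (expR (z j) / expR (z m))).
      by rewrite ler_wpM2l ?expR_ge0 // lef_pV2 ?posrE ?expR_gt0.
    by rewrite -expRB ler_expR; lra.
  apply: le_trans (ler_wpM2l (s0 j) (hD j)) _.
  by rewrite mulrC -[X in X <= _]add0r lerD ?mulr_ge0 ?ler_wpM2l // invr_ge0 ltW.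
by rewrite big_split /= -mulr_suml s1 mul1r sumr_const card_ord -mulrA mulr_natl.
Qed.

End SoftmaxLayer.

Section Gradient.
Context {R : realType} {d : nat}.
Implicit Types x p v : 'rV[R]_d.

Lemma derive_grad (F : 'rV[R]_d -> R) x v : differentiable F x ->
  'D_v F x = dot (grad F x) v.
Proof.
move=> dF; rewrite deriveE // {1}(row_sum_delta v) linear_sum /dot.
by apply: eq_bigr => i _; rewrite linearZ /= mxE -deriveE // [RHS]mulrC.
Qed.

Lemma is_derive_segment (F : 'rV[R]_d -> R) x p (s : R) :
  differentiable F (p + s *: (x - p)) ->
  is_derive s 1 (fun s => F (p + s *: (x - p))) ('D_(x - p) F (p + s *: (x - p))).
Proof.
move=> dF.
have quotE : (fun h : R => h^-1 *: (((fun s => F (p + s *: (x - p))) \o shift s) (h *: 1)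
                                    - F (p + s *: (x - p)))) =
             (fun h : R => h^-1 *: ((F \o shift (p + s *: (x - p))) (h *: (x - p))
                                    - F (p + s *: (x - p)))).
  apply: funext => h /=; congr (_ *: (F _ - _)).
  by rewrite /shift /= [h *: 1]mulr1 scalerDl addrCA addrA.
apply: DeriveDef; last by rewrite /derive quotE.
by rewrite /derivable quotE; exact: diff_derivable.
Qed.

Lemma derive_comp_scalar {f : 'rV[R]_d -> R} {g : R -> R} {x} v {dg} :
  differentiable f x -> is_derive (f x) 1 g dg -> 'D_v (g \o f) x = dg * 'D_v f x.
Proof.
move=> df dg_fx; have dg' : differentiable g (f x) by apply/derivable1_diffP; case: dg_fx.
have dgf : differentiable (g \o f) x by exact: differentiable_comp.
by rewrite deriveE // diff_comp //= diff1E // derive1E derive_val -deriveE // mulrC.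
Qed.

Lemma derive_affine (f : 'rV[R]_d -> R) x v c :
  (forall h : R, f (h *: v + x) - f x = h * c) -> 'D_v f x = c.
Proof.
move=> hf; apply: cvg_lim => //; apply: cvg_near_cst; near=> h.
have h0 : h != 0 by near: h; exact: nbhs_dnbhs_neq.
by rewrite /= /shift hf /GRing.scale /= mulKf.
Unshelve. all: by end_near.
Qed.

Lemma gradB (f g : 'rV[R]_d -> R) x :
  differentiable f x -> differentiable g x -> grad (f - g) x = grad f x - grad g x.
Proof.
by move=> df dg; apply/rowP => i; rewrite /grad !mxE deriveB //; exact: diff_derivable.
Qed.

(* Mean value theorem on the segment [p, x], then Cauchy-Schwarz. *)
Lemma lipschitz_grad_taylor {a b L : R} {F : 'rV[R]_d -> R} :
  0 <= L ->
  (forall x, cube a b x -> differentiable F x) ->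
  (forall x p, cube a b x -> cube a b p ->
     enorm (grad F x - grad F p) <= L * enorm (x - p)) ->
  forall x p, cube a b x -> cube a b p ->
    `|F x - F p - dot (grad F p) (x - p)| <= L * dot (x - p) (x - p).
Proof.
move=> L0 dF lipF x p hx hp.
set f := fun s => F (p + s *: (x - p)).
have df (s : R) : 0 <= s <= 1 ->
    is_derive s 1 f (dot (grad F (p + s *: (x - p))) (x - p)).
  move=> hs; have dFs := dF _ (cube_segment hx hp hs).
  by rewrite -derive_grad //; exact: is_derive_segment.
have [c hc] : exists2 c, c \in `[0, 1]%R &
    f 1 - f 0 = dot (grad F (p + c *: (x - p))) (x - p) * (1 - 0).
  apply: MVT_segment => //.
    by move=> s; rewrite in_itv /= => /andP[s0 s1]; apply: df; rewrite !ltW.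
  apply: continuous_in_subspaceT => s; rewrite inE /= in_itv /= => hs.
  by apply/differentiable_continuous/derivable1_diffP; have [] := df s hs.
move: hc; rewrite in_itv /= => hc.
rewrite /f scale1r scale0r addr0 subr0 mulr1 (addrC p (x - p)) subrK => ->.
rewrite -dotBl; apply: le_trans (normr_dot_le _ _) _.
have := lipF _ _ (cube_segment hx hp hc) hp; rewrite [p + _]addrC addrK enormZ.
rewrite ger0_norm; last by case/andP: hc.
rewrite -enorm_sqr expr2 mulrA => lip_c.
apply: le_trans (ler_wpM2r (enorm_ge0 _) lip_c) _.
apply: ler_wpM2r; first exact: enorm_ge0.
by rewrite mulrCA ler_piMl ?mulr_ge0 ?enorm_ge0 //; case/andP: hc.
Qed.

End Gradient.

Section TangentPlanes.
Context {R : realType} {d : nat}.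
Variables (F : 'rV[R]_d -> R) (V : 'rV[R]_d -> 'rV[R]_d) (K : R).
Implicit Types x p : 'rV[R]_d.

(* For V = grad F, the affine map x |-> dot x (tangent_slope p) + tangent_offset p
   is the tangent plane at p of Phi x = F x + K/2 |x|^2, and tangent_gap x p is
   the height of Phi x above it. *)
Definition tangent_slope p : 'rV[R]_d := V p + K *: p.
Definition tangent_offset p : R := F p + K / 2 * dot p p - dot (tangent_slope p) p.
Definition tangent_gap x p : R :=
  F x - F p - dot (V p) (x - p) + K / 2 * dot (x - p) (x - p).

Lemma tangent_gapE x p :
  dot x (tangent_slope p) + tangent_offset p = F x + K / 2 * dot x x - tangent_gap x p.
Proof.
rewrite /tangent_offset /tangent_gap /tangent_slope.
rewrite !dotBl !dotBr !dotDl !dotDr !dotZl !dotZr [dot x (V p)]dotC [dot p x]dotC.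
move: (dot (V p) x) (dot x p) (dot p p) (dot (V p) p) (dot x x) (F p) (F x).
by move=> *; field.
Qed.

Definition tangent_layer (t : R) {n} (P : 'I_n -> 'rV[R]_d) : 'rV[R]_d -> 'rV[R]_d :=
  softmax_layer t (\matrix_j tangent_slope (P j)) (\row_j tangent_offset (P j)) 0.

Lemma tangent_layerE t {n} (P : 'I_n -> 'rV[R]_d) x :
  let z j := t * (F x + K / 2 * dot x x - tangent_gap x (P j)) in
  tangent_layer t P x = \sum_j (expR (z j) / \sum_k expR (z k)) *: tangent_slope (P j).
Proof.
rewrite /tangent_layer softmax_layerE addr0 /expsum /logit.
under eq_bigr => j _ do rewrite rowK mxE tangent_gapE.
by under eq_bigr => j _ do under eq_bigr => k _ do rewrite rowK mxE tangent_gapE.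
Qed.

End TangentPlanes.

Lemma expR_tail_le {R : realType} {B c eps : R} : 0 <= B -> 0 < c -> 0 < eps ->
  exists2 t, 0 < t & B * expR (- (t * c)) <= eps.
Proof.
move=> B0 c0 eps0; exists ((B / eps + 1) / c).
  by rewrite divr_gt0 // ltr_wpDl // divr_ge0 // ltW.
rewrite mulrAC mulfK ?gt_eqF // expRN ler_pdivrMr ?expR_gt0 //.
apply: le_trans (_ : eps * (1 + (B / eps + 1)) <= _); last first.
  by rewrite ler_wpM2l ?expR_ge1Dx // ltW.
by rewrite mulrDr mulrDr mulrCA divff ?gt_eqF //; lra.
Qed.

Section TangentLayerApprox.
Context {R : realType} {d : nat}.
Variables (F : 'rV[R]_d -> R) (V : 'rV[R]_d -> 'rV[R]_d) (L : R).
Hypothesis L_gt0 : 0 < L.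
Hypothesis taylorF : forall x p, cube 0 1 x -> cube 0 1 p ->
  `|F x - F p - dot (V p) (x - p)| <= L * dot (x - p) (x - p).
Hypothesis lipV : forall x p, cube 0 1 x -> cube 0 1 p ->
  enorm (V x - V p) <= L * enorm (x - p).
Implicit Types x p : 'rV[R]_d.

(* The choice K = 4 L makes the gap comparable to |x - p|^2 from both sides. *)
Lemma tangent_gap_bounds x p : cube 0 1 x -> cube 0 1 p ->
  L * dot (x - p) (x - p) <= tangent_gap F V (4 * L) x p <= 3 * L * dot (x - p) (x - p).
Proof.
move=> hx hp; have := taylorF _ _ hx hp; rewrite /tangent_gap ler_norml => /andP[E1 E2].
by apply/andP; split; nra.
Qed.

Lemma tangent_slope_dist x p : cube 0 1 x -> cube 0 1 p ->
  enorm (tangent_slope V (4 * L) p - tangent_slope V (4 * L) x) <= 5 * L * enorm (x - p).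
Proof.
move=> hx hp; rewrite /tangent_slope opprD addrACA -scalerBr.
apply: le_trans (enormD_le _ _) _; rewrite enormZ ger0_norm; last by rewrite mulr_ge0 // ltW.
have := lipV _ _ hp hx; rewrite !(enorm_distC p); lra.
Qed.

(* Grid points within rho of x carry slopes within 5 L rho of the target; the
   others have gap at least L rho^2/2 more than the nearest grid point. *)
Lemma tangent_layer_near {n} {P : 'I_n -> 'rV[R]_d} {rho t : R} :
  0 < rho -> 0 < t -> (forall j, cube 0 1 (P j)) ->
  (forall x, cube 0 1 x -> exists m, dot (x - P m) (x - P m) <= rho ^+ 2 / 6) ->
  forall x, cube 0 1 x ->
  enorm (tangent_layer F V (4 * L) t P x - tangent_slope V (4 * L) x)
    <= 5 * L * rho + n%:R * (5 * L * Num.sqrt d%:R) * expR (- (t * (L * rho ^+ 2 / 2))).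
Proof.
move=> rho0 t0 hP net x hx; have [m hm] := net x hx.
rewrite tangent_layerE; apply: (softmax_average_near m) => [|j|j].
- by rewrite !mulr_ge0 // ltW.
- apply: le_trans (tangent_slope_dist _ _ hx (hP j)) _.
  apply: ler_wpM2l; first by rewrite mulr_ge0 // ltW.
  by rewrite enormE ler_sqrt ?ler0n // cube01_dist_sqr_le.
have [near|far] := lerP (enorm (x - P j)) rho.
  left; apply: le_trans (tangent_slope_dist _ _ hx (hP j)) _.
  by rewrite ler_wpM2l // mulr_ge0 // ltW.
right; have rho_far : rho ^+ 2 < dot (x - P j) (x - P j).
  by rewrite -enorm_sqr ltr_pXn2r // nnegrE ?enorm_ge0 // ltW.
have /andP[gap_j _] := tangent_gap_bounds _ _ hx (hP j).
have /andP[_ gap_m] := tangent_gap_bounds _ _ hx (hP m).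
have far_j : L * rho ^+ 2 <= L * dot (x - P j) (x - P j) by rewrite ler_wpM2l // ltW.
have near_m : L * dot (x - P m) (x - P m) <= L * (rho ^+ 2 / 6) by rewrite ler_wpM2l // ltW.
rewrite /= -mulrBr; apply: ler_wpM2l; first exact: ltW.
lra.
Qed.

Lemma tangent_layer_uniform (eps : R) : 0 < eps ->
  exists n (t : R) (W : 'M[R]_(n, d)) (a : 'rV[R]_n), [/\ (0 < n)%N, 0 < t &
    forall x, cube 0 1 x -> enorm (softmax_layer t W a 0 x - tangent_slope V (4 * L) x) <= eps].
Proof.
move=> eps0; pose rho := eps / (10 * L).
have rho0 : 0 < rho by rewrite divr_gt0 // mulr_gt0.
have mesh0 : 0 < rho ^+ 2 / 6 by rewrite divr_gt0 ?exprn_gt0.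
have [n [P [n0 hP net]]] := @cube_net _ d _ mesh0.
have B0 : 0 <= n%:R * (5 * L * Num.sqrt d%:R) by rewrite !mulr_ge0 ?sqrtr_ge0 // ltW.
have c0 : 0 < L * rho ^+ 2 / 2 by rewrite divr_gt0 // mulr_gt0 // exprn_gt0.
have eps2 : 0 < eps / 2 by rewrite divr_gt0.
have [t t0 tail] := expR_tail_le B0 c0 eps2.
exists n, t, (\matrix_j tangent_slope V (4 * L) (P j)),
  (\row_j tangent_offset F V (4 * L) (P j)); split => // x hx.
apply: le_trans (tangent_layer_near rho0 t0 hP net _ hx) _.
have -> : 5 * L * rho = eps / 2 by rewrite /rho; field; rewrite gt_eqF.
by rewrite -mulrA; lra.
Qed.

End TangentLayerApprox.

Lemma quadratic_layer_uniform {R : realType} {d : nat} {L eps : R} : 0 < L -> 0 < eps ->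
  exists n (t : R) (W : 'M[R]_(n, d)) (a : 'rV[R]_n), [/\ (0 < n)%N, 0 < t &
    forall x, cube 0 1 x -> enorm (softmax_layer t W a 0 x - (4 * L) *: x) <= eps].
Proof.
move=> L0 eps0.
have taylor0 (x p : 'rV[R]_d) : cube 0 1 x -> cube 0 1 p ->
    `|0 - 0 - dot (0 : 'rV[R]_d) (x - p)| <= L * dot (x - p) (x - p).
  by rewrite dot0l !subrr normr0 mulr_ge0 ?dot_ge0 // ltW.
have lip0 (x p : 'rV[R]_d) : cube 0 1 x -> cube 0 1 p ->
    enorm ((0 : 'rV[R]_d) - 0) <= L * enorm (x - p).
  by rewrite subrr enorm0 mulr_ge0 ?enorm_ge0 // ltW.
have [n [t [W [a [n0 t0 approx]]]]] :=
  tangent_layer_uniform (fun=> 0) (fun=> 0) _ L0 taylor0 lip0 _ eps0.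
by exists n, t, W, a; split => // x hx; rewrite -[_ *: x]add0r; exact: approx.
Qed.

Section LogSumExp.
Context {R : realType} {d : nat}.
Implicit Types (x v : 'rV[R]_d) (t : R).

Lemma differentiable_logit t w b x : differentiable (logit t w b) x.
Proof.
rewrite /logit; apply: differentiableM; first exact: differentiable_cst.
apply: differentiableD; last exact: differentiable_cst.
have -> : (fun y => dot y w) = \sum_(i < d) (fun y : 'rV[R]_d => y ord0 i * w ord0 i).
  by rewrite fct_sumE.
apply: differentiable_sum => i; apply: differentiableM; last exact: differentiable_cst.
exact: differentiable_coord.
Qed.

Lemma derive_logit t w b x v : 'D_v (logit t w b) x = t * dot v w.
Proof. by apply: derive_affine => h; rewrite /logit dotDl dotZl; ring. Qed.

Lemma differentiable_exp_logit t w b x :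
  differentiable (fun y => expR (logit t w b y)) x.
Proof.
apply: (differentiable_comp (differentiable_logit _ _ _ _)).
exact/derivable1_diffP/ex_derive.
Qed.

Lemma derive_exp_logit t w b x v :
  'D_v (fun y => expR (logit t w b y)) x = expR (logit t w b x) * (t * dot v w).
Proof.
by rewrite (derive_comp_scalar _ (differentiable_logit _ _ _ _) (is_derive_expR _)) derive_logit.
Qed.

Lemma expsum_sum {n} t (W : 'M[R]_(n, d)) a :
  expsum t W a = \sum_j (fun y => expR (logit t (row j W) (a ord0 j) y)).
Proof. by rewrite fct_sumE. Qed.

Lemma differentiable_expsum {n} t (W : 'M[R]_(n, d)) a x :
  differentiable (expsum t W a) x.
Proof. by rewrite expsum_sum; apply: differentiable_sum => j; exact: differentiable_exp_logit. Qed.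

Lemma derive_expsum {n} t (W : 'M[R]_(n, d)) a x v :
  'D_v (expsum t W a) x =
  \sum_j expR (logit t (row j W) (a ord0 j) x) * (t * dot v (row j W)).
Proof.
rewrite expsum_sum derive_sum; last by move=> j; exact/diff_derivable/differentiable_exp_logit.
by apply: eq_bigr => j _; rewrite derive_exp_logit.
Qed.

Definition lse {n} t (W : 'M[R]_(n, d)) (a : 'rV[R]_n) x : R := t^-1 * ln (expsum t W a x).

Lemma lse_comp {n} t (W : 'M[R]_(n, d)) a : lse t W a = (t^-1 *: (@ln R)) \o expsum t W a.
Proof. by []. Qed.

Lemma is_derive_scaled_ln t {y : R} : 0 < y -> is_derive y 1 (t^-1 *: (@ln R)) (t^-1 * y^-1).
Proof. by move=> y0; apply/is_deriveZ/is_derive1_ln. Qed.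

Lemma differentiable_lse {n} t (W : 'M[R]_(n, d)) a x : (0 < n)%N ->
  differentiable (lse t W a) x.
Proof.
move=> n0; rewrite lse_comp; apply: (differentiable_comp (differentiable_expsum _ _ _ _)).
by apply/derivable1_diffP; have [] := is_derive_scaled_ln t (expsum_gt0 t W a x n0).
Qed.

Lemma grad_lse {n} t (W : 'M[R]_(n, d)) a x : t != 0 -> (0 < n)%N ->
  grad (lse t W a) x = softmax_layer t W a 0 x.
Proof.
move=> t0 n0; apply/rowP => i; rewrite /grad mxE lse_comp.
have dln := is_derive_scaled_ln t (expsum_gt0 t W a x n0).
rewrite (derive_comp_scalar _ (differentiable_expsum _ _ _ _) dln) derive_expsum.
rewrite softmax_layerE addr0 summxE mulr_sumr.
apply: eq_bigr => j _; rewrite mxE dot_delta_mx !mxE.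
have := expsum_gt0 t W a x n0; move: (expsum t W a x) (expR _) (W j i) => S E w S0.
by field; rewrite t0 gt_eqF.
Qed.

Lemma continuous_softmax_layer {n} t (W : 'M[R]_(n, d)) a c : (0 < n)%N ->
  continuous (softmax_layer t W a c).
Proof.
move=> n0 x; apply: differentiable_continuous.
have -> : softmax_layer t W a c = (\sum_j (fun y =>
    (expR (logit t (row j W) (a ord0 j) y) / expsum t W a y) *: row j W)) + cst c.
  by apply: funext => y; rewrite softmax_layerE fct_sumE.
apply: differentiableD; last exact: differentiable_cst.
apply: differentiable_sum => j; apply: differentiableZl.
apply: differentiableM; first exact: differentiable_exp_logit.
by apply: differentiableV; [exact: differentiable_expsum | rewrite gt_eqF ?expsum_gt0].
Qed.

Lemma softmax_layerB_gradient {n1 n2} t1 t2 (W1 : 'M[R]_(n1, d)) (W2 : 'M[R]_(n2, d))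
    a1 a2 :
  t1 != 0 -> t2 != 0 -> (0 < n1)%N -> (0 < n2)%N ->
  exists G : 'rV[R]_d -> R, (forall x, differentiable G x) /\ continuous (grad G) /\
    forall x, grad G x = softmax_layer t1 W1 a1 0 x - softmax_layer t2 W2 a2 0 x.
Proof.
move=> t10 t20 n10 n20; exists (lse t1 W1 a1 - lse t2 W2 a2).
have gradG : grad (lse t1 W1 a1 - lse t2 W2 a2) =
    softmax_layer t1 W1 a1 0 - softmax_layer t2 W2 a2 0.
  apply: funext => x; rewrite gradB ?(grad_lse t1 W1 a1 x) ?(grad_lse t2 W2 a2 x) //;
  exact: differentiable_lse.
split => [x|]; first by apply: differentiableB; exact: differentiable_lse.
split => [|x].
- by rewrite gradG => x; apply: continuousB; exact: continuous_softmax_layer.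
- by rewrite gradG.
Qed.

End LogSumExp.

Theorem theorem2 (R : realType) (d : nat) (delta L : R) (F : 'rV[R]_d -> R) :
  (0 < d)%N -> 0 < delta -> 0 < L ->
  (exists U : set 'rV[R]_d,
      open U /\ cube (- delta) (1 + delta) `<=` U /\
      (forall x, U x -> differentiable F x) /\
      (forall x, U x -> {for x, continuous (grad F)})) ->
  (forall x y, cube (- delta) (1 + delta) x -> cube (- delta) (1 + delta) y ->
      enorm (grad F x - grad F y) <= L * enorm (x - y)) ->
  forall eps : R, 0 < eps ->
  exists (n1 n2 : nat) (t1 t2 : R) (W1 : 'M[R]_(n1, d)) (W2 : 'M[R]_(n2, d))
         (a1 : 'rV[R]_n1) (a2 : 'rV[R]_n2) (c1 c2 : 'rV[R]_d),
    [/\ (0 < n1)%N /\ (0 < n2)%N, 0 < t1 /\ 0 < t2,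
        (exists M : R, M < eps /\
          forall x, cube 0 1 x ->
            enorm (grad F x - (softmax_layer t1 W1 a1 c1 x
                               - softmax_layer t2 W2 a2 c2 x)) <= M) &
        (exists G : 'rV[R]_d -> R,
          (forall x, differentiable G x) /\ continuous (grad G) /\
          forall x, grad G x = softmax_layer t1 W1 a1 c1 x
                               - softmax_layer t2 W2 a2 c2 x)].
Proof.
move=> _ delta0 L0 [U [_ [sU [dU _]]]] lipF eps eps0.
have sub01 : @cube R d 0 1 `<=` cube (- delta) (1 + delta) by apply: subset_cube; lra.
have dF x : cube 0 1 x -> differentiable F x by move=> /sub01 /sU /dU.
have lipF01 x p : cube 0 1 x -> cube 0 1 p -> enorm (grad F x - grad F p) <= L * enorm (x - p).
  by move=> /sub01 hx /sub01 hp; exact: lipF.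
have eps4 : 0 < eps / 4 by rewrite divr_gt0.
have [n1 [t1 [W1 [a1 [n10 t10 approxF]]]]] :=
  tangent_layer_uniform _ _ _ L0 (lipschitz_grad_taylor (ltW L0) dF lipF01) lipF01 _ eps4.
have [n2 [t2 [W2 [a2 [n20 t20 approxQ]]]]] := quadratic_layer_uniform (d := d) L0 eps4.
exists n1, n2, t1, t2, W1, W2, a1, a2, 0, 0; split => //; last first.
  by apply: softmax_layerB_gradient; rewrite ?gt_eqF.
exists (eps / 2); split => [|x hx]; first lra.
set S1 := softmax_layer _ _ _ _ x; set S2 := softmax_layer _ _ _ _ x.
have -> : grad F x - (S1 - S2) =
    (S2 - (4 * L) *: x) - (S1 - tangent_slope (grad F) (4 * L) x).
  by apply/rowP => i; rewrite !mxE; ring.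
apply: le_trans (enormD_le _ _) _; rewrite enormN.
by have := approxF x hx; have := approxQ x hx; lra.
Qed.
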